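(* Let $M$ be a simple restricted $\bar{\mathfrak D}$-module with central charge $c$ and level $\ell\ne0$. If $r_M=-\infty$, then $M=K(z)^{\bar{\mathfrak D}}$ for some $z\in\mathbb C$ (i.e. $K=M$ and the $\bar{\mathfrak D}$-action is the one defining $K(z)^{\bar{\mathfrak D}}$). Hence $c=1-\frac{12z^2}{\ell}$ and $K$ is a simple $\bar{\mathfrak h}$-module.
   Context: $\bar{\mathfrak D}$ has basis $\{d_m,h_r,\bar c_1,\bar c_2,\bar c_3:m,r\in\mathbb Z\}$, brackets $[d_m,d_n]=(m-n)d_{m+n}+\delta_{m+n,0}\frac{m^3-m}{12}\bar c_1$, $[d_m,h_r]=-rh_{m+r}+\delta_{m+r,0}(m^2+m)\bar c_2$, $[h_r,h_s]=r\delta_{r+s,0}\bar c_3$, $\bar c_i$ central; $\bar{\mathfrak h}=\mathrm{span}\{h_r,\bar c_3\}$. Restricted: each vector killed by $d_i,h_i$ for large $i$. Central charge $c$: $\bar c_1$ acts as $c$; level $\ell$: $\bar c_3$ acts as $\ell$. For $z\in\mathbb C$ and a restricted $\bar{\mathfrak h}$-module $H$ of level $\ell\ne0$, $H(z)^{\bar{\mathfrak D}}$ is $H$ with $\bar c_1\mapsto1-\frac{12z^2}{\ell}$, $\bar c_2\mapsto z$, $d_n\mapsto\bar L_n=\frac1{2\ell}\sum_{k\in\mathbb Z}{:}h_{n-k}h_k{:}+\frac{(n+1)z}{\ell}h_n$, where ${:}h_rh_s{:}=h_rh_s$ if $r\le s$, $=h_sh_r$ otherwise. Invariants: with $\bar{\mathfrak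 h}_{\ge r}=\bigoplus_{i\ge0}\mathbb Ch_{r+i}$: $M(r)=\mathrm{Ann}_M(\bar{\mathfrak h}_{\ge r})$, $n_M=\min\{r:M(r)\ne0\}$, $M_0=M(n_M)$. With $z_M$ the scalar of $\bar c_2$ on $M$, let $\bar L_n$ (with $z=z_M$) act on $M$ and $d'_n=d_n-\bar L_n$; $Y_n=\bigcap_{p\ge n}\mathrm{Ann}_{M_0}(d'_p)$, $r_M=\min\{n\in\mathbb Z:Y_n\ne0\}$, or $-\infty$ if all $Y_n\ne0$; $K_0=\bigcap_nY_n$ when $r_M=-\infty$; $K=U(\bar{\mathfrak h})K_0$. *)

From HB Require Import structures.
From mathcomp Require Import all_boot all_algebra.
From mathcomp Require Import reals Rstruct complex.
Set Implicit Arguments. Unset Strict Implicit. Unset Printing Implicit Defensive.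
Import GRing.Theory Num.Theory.
Local Open Scope ring_scope.

Definition C : numClosedFieldType := Rdefinitions.R[i].

Section Dbar.
Variable V : lmodType C.

(* A representation of the Lie algebra \bar{D} on V:
   d m, h r, c1, c2, c3 are the operators by which d_m, h_r, \bar c_i act. *)
Definition is_lin (f : V -> V) : Prop :=
  forall (a : C) (u v : V), f (a *: u + v) = a *: f u + f v.

Definition delta0 (m : int) : C := if m == 0 then 1 else 0.

Definition is_Dbar_module (d h : int -> V -> V) (c1 c2 c3 : V -> V) : Prop :=
  [/\ (forall m, is_lin (d m)) /\ (forall r, is_lin (h r)) /\
        is_lin c1 /\ is_lin c2 /\ is_lin c3,
      (forall m n v, d m (d n v) - d n (d m v) =
          (m - n)%:~R *: d (m + n) v
          + (delta0 (m + n) * ((m ^+ 3 - m)%:~R / 12%:R)) *: c1 v),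
      (forall m r v, d m (h r v) - h r (d m v) =
          (- r)%:~R *: h (m + r) v
          + (delta0 (m + r) * (m ^+ 2 + m)%:~R) *: c2 v),
      (forall r s v, h r (h s v) - h s (h r v) =
          (r%:~R * delta0 (r + s)) *: c3 v) &
      (forall c, c = c1 \/ c = c2 \/ c = c3 ->
         (forall m v, c (d m v) = d m (c v)) /\
         (forall r v, c (h r v) = h r (c v)) /\
         (forall v, c (c1 v) = c1 (c v)) /\
         (forall v, c (c2 v) = c2 (c v)) /\
         (forall v, c (c3 v) = c3 (c v)))].

Definition restricted (d h : int -> V -> V) : Prop :=
  forall v, exists N : int, forall i, N <= i -> d i v = 0 /\ h i v = 0.

Definition Dbar_submodule (d h : int -> V -> V) (c1 c2 c3 : V -> V)
    (P : V -> Prop) : Prop :=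
  [/\ P 0, (forall a u v, P u -> P v -> P (a *: u + v)),
      (forall m v, P v -> P (d m v)), (forall r v, P v -> P (h r v)) &
      (forall v, P v -> P (c1 v) /\ P (c2 v) /\ P (c3 v))].

Definition Dbar_simple (d h : int -> V -> V) (c1 c2 c3 : V -> V) : Prop :=
  (exists v : V, v != 0) /\
  forall P, Dbar_submodule d h c1 c2 c3 P ->
    (forall v, P v -> v = 0) \/ (forall v, P v).

Definition Mr (h : int -> V -> V) (r : int) (v : V) : Prop :=
  forall i, r <= i -> h i v = 0.

Definition is_nM (h : int -> V -> V) (n : int) : Prop :=
  (exists v, Mr h n v /\ v != 0) /\
  forall r, r < n -> forall v, Mr h r v -> v = 0.

Definition nord (h : int -> V -> V) (n k : int) (v : V) : V :=
  let r := n - k in if r <= k then h r (h k v) else h k (h r v).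

Definition nord_partial (h : int -> V -> V) (n : int) (N : nat) (v : V) : V :=
  \sum_(i < (2 * N).+1) nord h n (i%:Z - N%:Z) v.

(* On a restricted module the (formally infinite) sum is finite when applied
   to v; we express it as the eventual value of the symmetric partial sums. *)
Definition Lbar_rel (h : int -> V -> V) (ell z : C) (n : int) (v w : V) : Prop :=
  exists N0 : nat, forall N : nat, (N0 <= N)%N ->
    w = (2%:R * ell)^-1 *: nord_partial h n N v
        + ((n + 1)%:~R * z / ell) *: h n v.

(* Y_n = intersection over p >= n of Ann_{M_0}(d'_p), d'_p = d_p - \bar L_p,
   with M_0 = M(nM) and \bar L_p built with z = zM *)
Definition Yn (d h : int -> V -> V) (ell zM : C) (nM n : int) (v : V) : Prop :=
  Mr h nM v /\ forall p, n <= p -> Lbar_rel h ell zM p v (d p v).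

(* r_M = -infinity : all Y_n are nonzero *)
Definition rM_minus_infty (d h : int -> V -> V) (ell zM : C) (nM : int) : Prop :=
  forall n : int, exists v, Yn d h ell zM nM n v /\ v != 0.

Definition K0 (d h : int -> V -> V) (ell zM : C) (nM : int) (v : V) : Prop :=
  forall n, Yn d h ell zM nM n v.

(* K = U(\bar h) K_0 : the smallest subspace containing K_0 and stable under
   all h_r (\bar c_3 acts by a scalar). *)
Inductive inK (d h : int -> V -> V) (ell zM : C) (nM : int) : V -> Prop :=
  | inK_K0 w : K0 d h ell zM nM w -> inK d h ell zM nM w
  | inK_zero : inK d h ell zM nM 0
  | inK_h r v : inK d h ell zM nM v -> inK d h ell zM nM (h r v)
  | inK_lin a u v : inK d h ell zM nM u -> inK d h ell zM nM v ->
                    inK d h ell zM nM (a *: u + v).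

Definition hbar_submodule (h : int -> V -> V) (c3 : V -> V) (P : V -> Prop) : Prop :=
  [/\ P 0, (forall a u v, P u -> P v -> P (a *: u + v)),
      (forall r v, P v -> P (h r v)) & (forall v, P v -> P (c3 v))].

Definition hbar_simple (h : int -> V -> V) (c3 : V -> V) (K : V -> Prop) : Prop :=
  hbar_submodule h c3 K /\ (exists v, K v /\ v != 0) /\
  forall P, hbar_submodule h c3 P -> (forall v, P v -> K v) ->
    (forall v, P v -> v = 0) \/ (forall v, K v -> P v).

End Dbar.

(* The Sugawara operators \bar L_n, built from the restricted action of \bar h, satisfy
   [\bar L_m, h_r] = [d_m, h_r]; so d'_m = d_m - \bar L_m commutes with \bar h, hence with
   every \bar L_n, and [d'_m, d'_n] = [d_m, d_n] - [\bar L_m, \bar L_n].  The Sugawara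
   relations [\bar L_m, \bar L_n] = (m - n) \bar L_{m+n} (n, m + n <> 0) and
   [\bar L_2, \bar L_{-2}] = 4 \bar L_0 + (1 - 12 z^2 / ell) / 2 then show, by downward
   induction with d'_{-1}, that a nonzero v in Y_{-2} is killed by every d'_p, so v lies in
   K_0, and comparing the central terms of [d'_2, d'_{-2}] on v gives c = 1 - 12 z^2 / ell.
   Now K is a nonzero \bar D-submodule, so K = M; d'_n vanishes on K, and therefore every
   \bar h-submodule is a \bar D-submodule, which makes K a simple \bar h-module. *)

From HB Require Import structures.
From mathcomp Require Import all_boot all_order all_algebra.
From mathcomp Require Import reals Rstruct complex.
From mathcomp Require Import ssrAC zify ring.
From Stdlib Require Import ClassicalEpsilon.
Import Order.TTheory GRing.Theory Num.Theory.
Local Open Scope ring_scope.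
Set Implicit Arguments.
Unset Strict Implicit.

Section LinearOperator.
Variables (V : lmodType C) (f : V -> V).
Hypothesis f_lin : is_lin f.

Lemma lin0 : f 0 = 0.
Proof.
have := f_lin 1 0 0; rewrite !scale1r addr0 => f00.
by apply: (addrI (f 0)); rewrite addr0 -f00.
Qed.

Lemma linD u v : f (u + v) = f u + f v.
Proof. by have := f_lin 1 u v; rewrite !scale1r. Qed.

Lemma linZ a u : f (a *: u) = a *: f u.
Proof. by have := f_lin a u 0; rewrite !addr0 lin0 addr0. Qed.

Lemma linN u : f (- u) = - f u.
Proof. by rewrite -scaleN1r linZ scaleN1r. Qed.

Lemma linB u v : f (u - v) = f u - f v.
Proof. by rewrite linD linN. Qed.

End LinearOperator.

Definition isum (M : zmodType) (a : int) (l : nat) (F : int -> M) : M :=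
  \sum_(i < l) F (a + i%:Z).
Arguments isum {M}.

Section IntervalSum.
Variable M : zmodType.
Implicit Types F G : int -> M.

Lemma isum0 a F : isum a 0 F = 0.
Proof. by rewrite /isum big_ord0. Qed.

Lemma isumS a l F : isum a l.+1 F = F a + isum (a + 1) l F.
Proof.
rewrite /isum big_ord_recl addr0; congr (_ + _).
by apply: eq_bigr => i _; congr F; rewrite /= /bump /=; lia.
Qed.

Lemma isum_cat a l1 l2 F :
  isum a (l1 + l2) F = isum a l1 F + isum (a + l1%:Z) l2 F.
Proof.
elim: l1 a => [|l1 IH] a; first by rewrite isum0 add0n add0r addr0.
by rewrite addSn !isumS IH addrA (_ : a + 1 + l1%:Z = a + l1.+1%:Z) //; lia.
Qed.

Lemma eq_isum a l F G : (forall k, a <= k < a + l%:Z -> F k = G k) ->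
  isum a l F = isum a l G.
Proof. by move=> FG; apply: eq_bigr => i _; rewrite FG //; have := ltn_ord i; lia. Qed.

Lemma isumD a l F G : isum a l (fun k => F k + G k) = isum a l F + isum a l G.
Proof. exact: big_split. Qed.

Lemma isumN a l F : isum a l (fun k => - F k) = - isum a l F.
Proof. exact: sumrN. Qed.

Lemma isum_shift a l m F : isum a l (fun k => F (k + m)) = isum (a + m) l F.
Proof. by apply: eq_bigr => i _; congr F; lia. Qed.

Lemma isum_eq0 a l F : (forall k, a <= k < a + l%:Z -> F k = 0) -> isum a l F = 0.
Proof. by move=> F0; rewrite (eq_isum (G := fun=> 0)) // /isum big1. Qed.

Lemma isum_pick a l x F : a <= x < a + l%:Z -> (forall k, k != x -> F k = 0) ->
  isum a l F = F x.
Proof.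
elim: l a => [|l IH] a ax F0; first lia.
rewrite isumS; have [ax_eq|ax_neq] := eqVneq a x.
  rewrite -ax_eq isum_eq0 ?addr0 // => k ak.
  by apply: F0; apply: contraTneq ak => ->; lia.
by rewrite (F0 a ax_neq) add0r IH //; move: ax_neq ax => /eqP; lia.
Qed.

Lemma isum_window a l lo l0 F :
  (forall k, k < lo \/ lo + l0%:Z <= k -> F k = 0) ->
  a <= lo -> lo + l0%:Z <= a + l%:Z -> isum a l F = isum lo l0 F.
Proof.
move=> F0 alo hil.
have -> : l = (absz (lo - a)%R + (l0 + absz (a + l%:Z - (lo + l0%:Z))%R))%N.
  by apply/eqP; rewrite -eqz_nat !PoszD !gez0_abs; lia.
rewrite !isum_cat isum_eq0 ?add0r; last by move=> k ak; apply: F0; lia.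
rewrite [X in _ + X]isum_eq0 ?addr0; last by move=> k ak; apply: F0; lia.
by have -> : a + (absz (lo - a))%:Z = lo by lia.
Qed.

End IntervalSum.

Section IntervalSumModule.
Variable V : lmodType C.

Lemma lin_isum (f : V -> V) a l F : is_lin f ->
  f (isum a l F) = isum a l (fun k => f (F k)).
Proof. by move=> f_lin; rewrite /isum (big_morph f (linD f_lin) (lin0 f_lin)). Qed.

Lemma isumZ (c : C) a l (F : int -> V) :
  isum a l (fun k => c *: F k) = c *: isum a l F.
Proof. by rewrite /isum scaler_sumr. Qed.

Lemma isumZl (v : V) a l (F : int -> C) :
  isum a l (fun k => F k *: v) = isum a l F *: v.
Proof. by rewrite /isum scaler_suml. Qed.

Lemma isum_closed (P : V -> Prop) a l F : P 0 ->
  (forall s x y, P x -> P y -> P (s *: x + y)) -> (forall k, P (F k)) -> P (isum a l F).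
Proof.
move=> P0 P_lin PF; elim: l a => [|l IH] a; first by rewrite isum0.
by rewrite isumS -[F a]scale1r; apply: P_lin.
Qed.

End IntervalSumModule.

Lemma isum_mulr (R : pzRingType) a l (F : int -> R) (c : R) :
  isum a l (fun k => F k * c) = isum a l F * c.
Proof. by rewrite /isum mulr_suml. Qed.

Lemma isum_intr_neg (K : nat) : isum (- K%:Z) K (fun k => k%:~R : C) = - (K%:R * (K%:R + 1) / 2%:R).
Proof.
elim: K => [|K IH]; first by rewrite isum0 !mul0r oppr0.
rewrite isumS (_ : - K.+1%:Z + 1 = - K%:Z); last by lia.
by rewrite IH intrN -natr1; field.
Qed.

Section Sugawara.
Variables (V : lmodType C) (h : int -> V -> V) (ell z : C).
Hypothesis h_lin : forall r, is_lin (h r).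
Hypothesis h_comm : forall r s v,
  h r (h s v) - h s (h r v) = (r%:~R * delta0 (r + s)) *: (ell *: v).
Hypothesis ell_neq0 : ell != 0.
Hypothesis h_restricted : forall v, exists N : int, forall i, N <= i -> h i v = 0.

Definition hbound (u : V) : int :=
  proj1_sig (constructive_indefinite_description _ (h_restricted u)).

Lemma hbound_eq0 u i : hbound u <= i -> h i u = 0.
Proof. exact: (proj2_sig (constructive_indefinite_description _ (h_restricted u)) i). Qed.

Lemma h0 r : h r 0 = 0.
Proof. exact: lin0 (h_lin r). Qed.

Lemma nord_eq0 n k u : hbound u <= k \/ hbound u <= n - k -> nord h n k u = 0.
Proof.
rewrite /nord; case: ifP => le hk.
  by rewrite (@hbound_eq0 _ k) ?h0 //; lia.
by rewrite (@hbound_eq0 _ (n - k)) ?h0 //; lia.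
Qed.

Lemma nordE n k u : n != 0 -> nord h n k u = h (n - k) (h k u).
Proof.
move=> n_neq0; rewrite /nord; case: ifP => // _.
have := h_comm k (n - k) u; rewrite (_ : k + (n - k) = n); last by lia.
by rewrite /delta0 ifN // mulr0 scale0r => /eqP; rewrite subr_eq0 => /eqP.
Qed.

Lemma nord_lin n k : is_lin (nord h n k).
Proof. by move=> a u v; rewrite /nord; case: ifP => _; rewrite !h_lin. Qed.

Lemma nord_partial_isum n N u :
  nord_partial h n N u = isum (- N%:Z) (2 * N).+1 (fun k => nord h n k u).
Proof. by apply: eq_bigr => i _; congr (nord h n _ u); lia. Qed.

(* [nord h n k u] vanishes unless [|k| < nord_width n u]. *)
Definition nord_width (n : int) (u : V) : nat := (absz (hbound u) + absz n).+1.

Lemma nord_partial_stable n N u : (nord_width n u <= N)%N ->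
  nord_partial h n N u = nord_partial h n (nord_width n u) u.
Proof.
move=> wN; rewrite !nord_partial_isum.
have nord_out k :
    k < - (nord_width n u)%:Z \/ - (nord_width n u)%:Z + (2 * nord_width n u)%N%:Z <= k ->
    nord h n k u = 0.
  by move=> hk; apply: nord_eq0; rewrite /nord_width in hk; lia.
by rewrite (isum_window nord_out) 1?[RHS](isum_window nord_out) //; lia.
Qed.

Definition alpha (n : int) : C := (n + 1)%:~R * z / ell.
Definition gamma (m : int) : C := (m ^+ 2 + m)%:~R * z.

Definition Ltrunc n N u := (2%:R * ell)^-1 *: nord_partial h n N u + alpha n *: h n u.

Definition Lbar n u := Ltrunc n (nord_width n u) u.

Lemma Lbar_trunc n N u : (nord_width n u <= N)%N -> Lbar n u = Ltrunc n N u.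
Proof. by move=> wN; rewrite /Lbar /Ltrunc (nord_partial_stable wN). Qed.

Lemma Lbar_relP n u : Lbar_rel h ell z n u (Lbar n u).
Proof. by exists (nord_width n u) => N wN; rewrite (Lbar_trunc wN). Qed.

Lemma Lbar_rel_uniq n u w : Lbar_rel h ell z n u w -> w = Lbar n u.
Proof.
case=> N0 wE; rewrite (wE (maxn N0 (nord_width n u))) ?leq_maxl //.
by rewrite (@Lbar_trunc n (maxn N0 (nord_width n u))) ?leq_maxr.
Qed.

Lemma nord_partial_lin n N : is_lin (nord_partial h n N).
Proof.
move=> a u v; rewrite /nord_partial scaler_sumr -big_split.
by apply: eq_bigr => i _; apply: nord_lin.
Qed.

Lemma Ltrunc_lin n N : is_lin (Ltrunc n N).
Proof.
move=> a u v; rewrite /Ltrunc nord_partial_lin h_lin !scalerDr !scalerA.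
by rewrite (mulrC _ a) (mulrC (alpha n) a) -!scalerA addrACA.
Qed.

Lemma Lbar_lin n : is_lin (Lbar n).
Proof.
move=> a u v.
set N := maxn (nord_width n (a *: u + v)) (maxn (nord_width n u) (nord_width n v)).
rewrite (@Lbar_trunc n N) ?leq_maxl // (@Lbar_trunc n N u); last by rewrite /N; lia.
by rewrite (@Lbar_trunc n N v) ?Ltrunc_lin //; rewrite /N; lia.
Qed.

Lemma Lbar_commute (T : V -> V) n u : is_lin T -> (forall r w, T (h r w) = h r (T w)) ->
  T (Lbar n u) = Lbar n (T u).
Proof.
move=> T_lin Th; set N := maxn (nord_width n u) (nord_width n (T u)).
rewrite (@Lbar_trunc n N u) ?leq_maxl // (@Lbar_trunc n N (T u)) ?leq_maxr //.
rewrite /Ltrunc (linD T_lin) !(linZ T_lin) Th !nord_partial_isum (lin_isum _ _ _ T_lin).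
by congr (_ *: _ + _); apply: eq_isum => k _; rewrite /nord; case: ifP => _; rewrite !Th.
Qed.

Lemma Lbar_closed (P : V -> Prop) : P 0 ->
  (forall s x y, P x -> P y -> P (s *: x + y)) -> (forall r x, P x -> P (h r x)) ->
  forall m u, P u -> P (Lbar m u).
Proof.
move=> P0 P_lin Ph m u Pu; rewrite /Lbar /Ltrunc nord_partial_isum.
apply: (P_lin); last by rewrite -[_ *: h m u]addr0; apply: (P_lin) => //; apply: (Ph).
by apply: isum_closed => // k; rewrite /nord; case: ifP => _; apply: (Ph); apply: (Ph).
Qed.

Lemma h_comm3 a b r u : h a (h b (h r u)) - h r (h a (h b u)) =
  (b%:~R * delta0 (b + r) * ell) *: h a u + (a%:~R * delta0 (a + r) * ell) *: h b u.
Proof.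
rewrite -[h b (h r u)](subrK (h r (h b u))) h_comm (linD (h_lin a)) !(linZ (h_lin a)).
rewrite -[h a (h r (h b u))](subrK (h r (h a (h b u)))) h_comm.
by rewrite !scalerA addrA addrK.
Qed.

Lemma nord_h_comm m k r u : nord h m k (h r u) - h r (nord h m k u) =
  (k%:~R * delta0 (k + r) * ell) *: h (m - k) u
  + ((m - k)%:~R * delta0 (m - k + r) * ell) *: h k u.
Proof. by rewrite /nord; case: ifP => _; rewrite h_comm3 // addrC. Qed.

Lemma Lbar_h_comm m r u : Lbar m (h r u) - h r (Lbar m u) =
  (- r)%:~R *: h (m + r) u + (delta0 (m + r) * gamma m) *: u.
Proof.
set N := maxn (maxn (nord_width m (h r u)) (nord_width m u)) (absz r + absz (m + r)).
rewrite (@Lbar_trunc m N (h r u)); last by rewrite /N; lia.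
rewrite (@Lbar_trunc m N u); last by rewrite /N; lia.
rewrite /Ltrunc (linD (h_lin r)) !(linZ (h_lin r)) !nord_partial_isum.
rewrite (lin_isum _ _ _ (h_lin r)) opprD addrACA -!scalerBr -isumN -isumD.
under eq_isum => k _ do rewrite nord_h_comm.
rewrite isumD (@isum_pick _ _ _ (- r)); first last.
- by move=> k kr; rewrite /delta0 ifN ?mulr0 ?mul0r ?scale0r //; apply: contra kr; lia.
- by rewrite /N; lia.
rewrite (@isum_pick _ _ _ (m + r)); first last.
- by move=> k kr; rewrite /delta0 ifN ?mulr0 ?mul0r ?scale0r //; apply: contra kr; lia.
- by rewrite /N; lia.
rewrite h_comm !scalerA (_ : m - - r = m + r) 1?(_ : m - (m + r) = - r); try lia.
rewrite (_ : - r + r = 0); last lia.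
rewrite -scalerDl !scalerA; congr (_ *: _ + _ *: _).
  by rewrite /delta0 eqxx; field.
by rewrite /alpha /gamma !(intrD, intrM, rmorphXn) /=; field.
Qed.

Lemma Lbar_nord_comm m n k w : n != 0 ->
  Lbar m (nord h n k w) - nord h n k (Lbar m w) =
  (k - n)%:~R *: h (m + n - k) (h k w) + (- k)%:~R *: h (n - k) (h (m + k) w) +
  ((delta0 (m + n - k) * gamma m) *: h k w + (delta0 (m + k) * gamma m) *: h (n - k) w).
Proof.
move=> n_neq0; rewrite !nordE //.
have LhE r u : Lbar m (h r u) =
    h r (Lbar m u) + ((- r)%:~R *: h (m + r) u + (delta0 (m + r) * gamma m) *: u).
  by rewrite -Lbar_h_comm addrC subrK.
rewrite !LhE; move: (Lbar m w) => L.
rewrite !(linD (h_lin _)) !(linZ (h_lin _)) (_ : m + (n - k) = m + n - k); last by lia.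
rewrite (_ : - (n - k) = k - n); last by lia.
set A := h (n - k) (h k L).
by rewrite addrAC [A + _]addrC addrK [LHS]addrA [LHS](ACl ((3*1)*(4*2))).
Qed.

Lemma Lbar_comm_expand m n p w N : n != 0 -> p = m + n ->
  (nord_width n w <= N)%N -> (nord_width n (Lbar m w) <= N)%N ->
  (absz p <= N)%N -> (absz m <= N)%N ->
  Lbar m (Lbar n w) - Lbar n (Lbar m w) =
  (2%:R * ell)^-1 *: (isum (- N%:Z) (2 * N).+1 (fun k => (k - n)%:~R *: h (p - k) (h k w))
     + isum (- N%:Z) (2 * N).+1 (fun k => (- k)%:~R *: h (n - k) (h (m + k) w))
     + (2%:R * gamma m) *: h p w)
  + alpha n *: ((- n)%:~R *: h p w + (delta0 p * gamma m) *: w).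
Proof.
move=> n_neq0 -> wN wLN pN mN.
rewrite (Lbar_trunc wN) (Lbar_trunc wLN) /Ltrunc (linD (Lbar_lin m)) !(linZ (Lbar_lin m)).
rewrite opprD addrACA -!scalerBr Lbar_h_comm; congr (_ *: _ + _).
rewrite !nord_partial_isum (lin_isum _ _ _ (Lbar_lin m)) -isumN -[LHS]isumD.
under eq_isum => k _ do rewrite (Lbar_nord_comm _ _ _ n_neq0).
rewrite isumD isumD; congr (_ + _).
rewrite isumD (@isum_pick _ _ _ (m + n)); first last.
- by move=> k km; rewrite /delta0 ifN ?mul0r ?scale0r //; apply: contra km; lia.
- lia.
rewrite (@isum_pick _ _ _ (- m)); first last.
- by move=> k km; rewrite /delta0 ifN ?mul0r ?scale0r //; apply: contra km; lia.
- lia.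
rewrite (_ : n - - m = m + n); last by lia.
by rewrite !subrr /delta0 eqxx !mul1r -scalerDl mulr_natl mulr2n.
Qed.

Lemma Lbar_comm m n w : n != 0 -> m + n != 0 ->
  Lbar m (Lbar n w) - Lbar n (Lbar m w) = (m - n)%:~R *: Lbar (m + n) w.
Proof.
move=> n_neq0 p_neq0; set p := m + n.
set B : nat := (absz (hbound w) + absz p).+1.
set T := fun j => h (p - j) (h j w).
have window a l (F : int -> V) : (forall k, T k = 0 -> F k = 0) ->
    a <= - B%:Z -> - B%:Z + (2 * B)%N%:Z <= a + l%:Z ->
    isum a l F = isum (- B%:Z) (2 * B) F.
  move=> FT aB Bl; apply: isum_window => // k kB; apply: FT.
  by rewrite /T -nordE // nord_eq0 //; rewrite /B in kB; lia.
set N := maxn (maxn (maxn (nord_width n w) (nord_width n (Lbar m w))) (maxn (absz p) (absz m)))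
              (maxn (nord_width p w) (B + absz m)).
rewrite (@Lbar_comm_expand m n p w N) //; try by rewrite /N; lia.
rewrite (@Lbar_trunc p N w); last by rewrite /N; lia.
rewrite /Ltrunc nord_partial_isum.
rewrite (eq_isum (F := fun k => (- k)%:~R *: h (n - k) (h (m + k) w))
                 (G := fun k => (m - (k + m))%:~R *: T (k + m))); last first.
  move=> k _; rewrite /T /p (_ : m + n - (k + m) = n - k); last by lia.
  by rewrite (_ : m - (k + m) = - k) 1?(addrC k m) //; lia.
rewrite (isum_shift _ _ m (fun j => (m - j)%:~R *: T j)).
rewrite [in RHS](eq_isum (G := T)) => [|k _]; last exact: nordE.
rewrite [X in _ *: (_ + X + _)](window _ _ (fun j => (m - j)%:~R *: T j)); first last.
- by rewrite /N; lia.
- by rewrite /N; lia.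
- by move=> k ->; rewrite scaler0.
rewrite [X in _ *: (X + _ + _)](window _ _ (fun k => (k - n)%:~R *: T k)); first last.
- by rewrite /N; lia.
- by rewrite /N; lia.
- by move=> k ->; rewrite scaler0.
rewrite [X in _ = _ *: (_ *: X + _)]window //; try by rewrite /N; lia.
rewrite -isumD (eq_isum (G := fun k => (m - n)%:~R *: T k)) => [|k _]; last first.
  by rewrite -scalerDl -intrD; congr (_ *: _); congr intr; lia.
rewrite isumZ /delta0 ifN // mul0r scale0r addr0.
rewrite !scalerDr !scalerA -addrA -scalerDl; congr (_ *: _ + _ *: _).
  by rewrite mulrC.
by rewrite /alpha /gamma /p !(intrD, intrM, intrN, intrB, rmorphXn) /=; field.
Qed.

Lemma h_pair_neg k w : k < 0 -> h (- k) (h k w) = nord h 0 k w - (k%:~R * ell) *: w.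
Proof.
move=> k_lt0; rewrite /nord sub0r ifF; last by apply/negbTE; lia.
have := h_comm (- k) k w; rewrite addNr /delta0 eqxx mulr1 scalerA intrN mulNr scaleNr.
by move/eqP; rewrite subr_eq => /eqP ->; rewrite addrC.
Qed.

Lemma h_pair_nonneg k w : 0 <= k -> h (- k) (h k w) = nord h 0 k w.
Proof. by move=> k_ge0; rewrite /nord sub0r ifT //; lia. Qed.

Lemma isum_h_pair N w : isum (- N%:Z) (2 * N).+1 (fun k => h (- k) (h k w)) =
  isum (- N%:Z) (2 * N).+1 (fun k => nord h 0 k w) + (N%:R * (N%:R + 1) / 2%:R * ell) *: w.
Proof.
rewrite (_ : (2 * N).+1 = N + N.+1)%N; last by lia.
rewrite !isum_cat (_ : - N%:Z + N%:Z = 0); last by lia.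
rewrite [isum 0 _ _](eq_isum (G := fun k => nord h 0 k w)) => [|k k_ge0]; last first.
  by apply: h_pair_nonneg; lia.
rewrite [isum _ N _](eq_isum (G := fun k => nord h 0 k w - (k%:~R * ell) *: w)).
  by rewrite isumD isumN isumZl isum_mulr isum_intr_neg mulNr scaleNr opprK addrAC.
by move=> k kN; apply: h_pair_neg; lia.
Qed.

Lemma isum_h_pair_2 N w : ((absz (hbound w)).+1 < N)%N ->
  isum (- N%:Z) (2 * N).+1 (fun k => (k + 2)%:~R *: h (- k) (h k w))
  + isum (- N%:Z + 2) (2 * N).+1 (fun k => (2 - k)%:~R *: h (- k) (h k w))
  = 4%:R *: isum (- N%:Z) (2 * N).+1 (fun k => nord h 0 k w) + ell *: w.
Proof.
move=> bN; set T := fun k => h (- k) (h k w).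
have shifted : isum (- N%:Z + 2) (2 * N).+1 (fun k => (2 - k)%:~R *: T k) =
    isum (- N%:Z) (2 * N).+1 (fun k => (2 - k)%:~R *: T k)
    - (N + 2)%:R *: T (- N%:Z) - (N + 1)%:R *: T (- N%:Z + 1).
  rewrite [in LHS](_ : (2 * N).+1 = (2 * N).-1 + 2)%N; last by lia.
  rewrite [in RHS](_ : (2 * N).+1 = 2 + (2 * N).-1)%N; last by lia.
  rewrite !isum_cat (_ : - N%:Z + 2%N%:Z = - N%:Z + 2) //.
  rewrite [X in _ + X]isum_eq0 ?addr0 => [|k kN]; last first.
    by rewrite /T (@hbound_eq0 w k) ?h0 ?scaler0 //; lia.
  rewrite !isumS isum0 addr0.
  rewrite (_ : 2 - - N%:Z = (N + 2)%N); last by lia.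
  rewrite (_ : 2 - (- N%:Z + 1) = (N + 1)%N); last by lia.
  by rewrite [RHS](ACl (3*(1*4)*(2*5))) /= !subrr !addr0.
rewrite shifted !addrA -isumD.
rewrite (eq_isum (G := fun k => 4%:R *: T k)) => [|k _]; last first.
  by rewrite -scalerDl -intrD (_ : k + 2 + (2 - k) = 4) //; ring.
rewrite isumZ isum_h_pair /T !h_pair_neg; [|lia|lia].
rewrite !(@nord_eq0 0 _ w); [|lia|lia].
rewrite !sub0r !scalerN !opprK !scalerDr !scalerA -!addrA -!scalerDl.
by congr (_ + _ *: _); rewrite !(intrD, intrN) natrD; field.
Qed.

Lemma Lbar_comm_2_neg2 w : Lbar 2 (Lbar (-2) w) - Lbar (-2) (Lbar 2 w) =
  4%:R *: Lbar 0 w + (2%:R^-1 * (1 - 12%:R * z ^+ 2 / ell)) *: w.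
Proof.
set N := maxn (maxn (nord_width (-2) w) (nord_width (-2) (Lbar 2 w)))
              (maxn (nord_width 0 w) (absz (hbound w)).+2).
rewrite (@Lbar_comm_expand 2 (-2) 0 w N) //; try by rewrite /N; lia.
rewrite (@Lbar_trunc 0 N w) /Ltrunc ?nord_partial_isum; last by rewrite /N; lia.
rewrite (eq_isum (F := fun k => (k - -2)%:~R *: h (0 - k) (h k w))
                 (G := fun k => (k + 2)%:~R *: h (- k) (h k w))); last first.
  by move=> k _; rewrite sub0r opprK.
rewrite (eq_isum (F := fun k => (- k)%:~R *: h (-2 - k) (h (2 + k) w))
                 (G := fun k => (2 - (k + 2))%:~R *: h (- (k + 2)) (h (k + 2) w))); last first.
  move=> k _; rewrite (_ : 2 - (k + 2) = - k); last by lia.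
  by rewrite (_ : - (k + 2) = -2 - k) 1?(addrC k) //; lia.
rewrite (isum_shift _ _ 2 (fun j => (2 - j)%:~R *: h (- j) (h j w))).
rewrite isum_h_pair_2; last by rewrite /N; lia.
rewrite !scalerDr !scalerA [LHS]addrA [LHS](ACl (1*(3*4)*(2*5))) /= -!scalerDl.
rewrite /alpha /gamma /delta0 eqxx; congr (_ *: _ + _ *: _ + _ *: _).
- by rewrite mulrC.
- by rewrite !(intrD, intrN, rmorphXn) /=; field.
- by rewrite !(intrD, intrN, rmorphXn) /=; field.
Qed.

End Sugawara.

Section DbarModule.
Variables (V : lmodType C) (d h : int -> V -> V) (c1 c2 c3 : V -> V).
Variables (c ell z : C) (nM : int).
Hypothesis Dmod : is_Dbar_module d h c1 c2 c3.
Hypothesis restr : restricted d h.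
Hypothesis c1E : forall v, c1 v = c *: v.
Hypothesis c3E : forall v, c3 v = ell *: v.
Hypothesis ell_neq0 : ell != 0.
Hypothesis c2E : forall v, c2 v = z *: v.

Let d_lin m : is_lin (d m). Proof. by case: Dmod => [[]]. Qed.

Let h_lin r : is_lin (h r). Proof. by case: Dmod => [[_ []]]. Qed.

Let d_comm m n v : d m (d n v) - d n (d m v) =
  (m - n)%:~R *: d (m + n) v + (delta0 (m + n) * ((m ^+ 3 - m)%:~R / 12%:R) * c) *: v.
Proof. by case: Dmod => _ -> _ _ _; rewrite c1E scalerA. Qed.

Let dh_comm m r v : d m (h r v) - h r (d m v) =
  (- r)%:~R *: h (m + r) v + (delta0 (m + r) * gamma z m) *: v.
Proof. by case: Dmod => _ _ -> _ _; rewrite c2E scalerA /gamma mulrA. Qed.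

Let h_comm r s v : h r (h s v) - h s (h r v) = (r%:~R * delta0 (r + s)) *: (ell *: v).
Proof. by case: Dmod => _ _ _ -> _; rewrite c3E. Qed.

Let h_restricted v : exists N : int, forall i, N <= i -> h i v = 0.
Proof. by have [N dhN] := restr v; exists N => i /dhN []. Qed.

Local Notation L := (Lbar ell z h_restricted).
Local Notation K := (inK d h ell z nM).

Let L_lin := Lbar_lin z h_lin ell_neq0 h_restricted.

Definition dprime m u := d m u - L m u.

Lemma dprime_lin m : is_lin (dprime m).
Proof. by move=> a u v; rewrite /dprime d_lin L_lin scalerBr opprD addrACA. Qed.

Lemma dprime_h m r u : dprime m (h r u) = h r (dprime m u).
Proof.
rewrite /dprime (linB (h_lin r)) -[d m (h r u)](subrK (h r (d m u))) dh_comm.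
rewrite -[L m (h r u)](subrK (h r (L m u))) (Lbar_h_comm z h_lin h_comm ell_neq0).
by rewrite opprD addrACA subrr add0r.
Qed.

Lemma dprime_L m n u : dprime m (L n u) = L n (dprime m u).
Proof. exact: (Lbar_commute z h_lin ell_neq0 h_restricted _ _ (dprime_lin m) (dprime_h m)). Qed.

Lemma dprime_comm m n w : dprime m (dprime n w) - dprime n (dprime m w) =
  (d m (d n w) - d n (d m w)) - (L m (L n w) - L n (L m w)).
Proof.
have expand p q :
    dprime p (dprime q w) = d p (d q w) - L p (d q w) - (L q (d p w) - L q (L p w)).
  by rewrite {1}[dprime q w]/dprime (linB (dprime_lin p)) dprime_L (linB (L_lin q)).
rewrite !expand; move: (d m (d n w)) (d n (d m w)) (L m (d n w)) (L n (d m w)).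
move: (L m (L n w)) (L n (L m w)) => A B P Q R S.
by rewrite !opprD !opprK !addrA [LHS](ACl (1*5*8*4*((2*7)*(3*6)))) /= !addNr !addr0.
Qed.

Lemma dprime_vanish v n0 : n0 <= -2 -> (forall p, n0 <= p -> dprime p v = 0) ->
  forall p, dprime p v = 0.
Proof.
move=> n0_le v_above.
suff below k : dprime (n0 - k%:Z) v = 0.
  move=> p; have [/v_above //|p_lt] := lerP n0 p.
  by have := below (absz (n0 - p)); rewrite gtz0_abs ?subr_gt0 // opprB addrC subrK.
elim: k => [|k IH]; first by rewrite subr0 v_above.
(* For q <= -2 the central terms vanish and [d'_{-1}, d'_q] = (-1 - q) d'_{q-1}. *)
have := dprime_comm (-1) (n0 - k%:Z) v.
rewrite IH v_above; last by lia.
rewrite !(lin0 (dprime_lin _)) subrr d_comm (Lbar_comm z h_lin h_comm ell_neq0);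
  try (apply/eqP; lia).
rewrite /delta0 ifN; last by apply/eqP; lia.
rewrite mul0r mul0r scale0r addr0 -scalerBr => /esym/eqP; rewrite scaler_eq0 => /orP[].
  by rewrite intr_eq0 => /eqP; lia.
by move/eqP; rewrite (_ : -1 + (n0 - k%:Z) = n0 - k.+1%:Z) //; lia.
Qed.

Lemma d_K0 m u : K0 d h ell z nM u -> d m u = L m u.
Proof.
by move=> K0u; have [_ dL] := K0u m; exact: (Lbar_rel_uniq h_lin ell_neq0 _ (dL m (lexx m))).
Qed.

Lemma dprime_K0 m u : K0 d h ell z nM u -> dprime m u = 0.
Proof. by move=> K0u; rewrite /dprime (d_K0 m K0u) subrr. Qed.

Lemma central_charge_eq v : K0 d h ell z nM v -> v != 0 -> c = 1 - 12%:R * z ^+ 2 / ell.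
Proof.
(* On v, [d'_2, d'_{-2}] = 4 d'_0 + (c - (1 - 12 z^2 / ell)) / 2 and d'_0 v = 0. *)
move=> K0v v_neq0; have := dprime_comm 2 (-2) v.
rewrite !(dprime_K0 _ K0v) !(lin0 (dprime_lin _)) subrr d_comm.
rewrite (Lbar_comm_2_neg2 z h_lin h_comm ell_neq0) (d_K0 0 K0v) addrN /delta0 eqxx mul1r.
rewrite (_ : (2 - -2)%:~R = 4%:R :> C) // [X in 0 = X - _]addrC addrKA -scalerBl.
move/esym/eqP; rewrite scaler_eq0 (negbTE v_neq0) orbF subr_eq0 => /eqP.
rewrite (_ : ((2 ^+ 3 - 2)%:~R / 12%:R : C) = 2%:R^-1); last first.
  by rewrite !(intrD, intrB, intrN, rmorphXn) /=; field.
by move/(mulfI _); apply; rewrite invr_eq0 pnatr_eq0.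
Qed.

Lemma inK_scale a u : K u -> K (a *: u).
Proof. by move=> Ku; rewrite -[a *: u]addr0; apply: inK_lin => //; apply: inK_zero. Qed.

Lemma inK_add u v : K u -> K v -> K (u + v).
Proof. by move=> Ku Kv; rewrite -[u]scale1r; apply: inK_lin. Qed.

Lemma inK_L m u : K u -> K (L m u).
Proof.
apply: (Lbar_closed z ell_neq0 h_restricted (P := K)).
- exact: inK_zero.
- exact: inK_lin.
- exact: inK_h.
Qed.

Lemma inK_d m u : K u -> K (d m u).
Proof.
elim=> [w K0w | | r v Kv Kdv | a u1 v _ Kdu1 _ Kdv].
- by rewrite (d_K0 m K0w); apply/inK_L/inK_K0.
- by rewrite (lin0 (d_lin m)); apply: inK_zero.
- rewrite -[d m (h r v)](subrK (h r (d m v))) dh_comm.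
  by do !apply: inK_add; do ?apply: inK_scale; do ?apply: inK_h.
- by rewrite d_lin; apply: inK_lin.
Qed.

Lemma inK_Dbar_submodule : Dbar_submodule d h c1 c2 c3 K.
Proof.
split; [exact: inK_zero | exact: inK_lin | exact: inK_d | exact: inK_h |].
by move=> v Kv; rewrite c1E c2E c3E; split; [|split]; apply: inK_scale.
Qed.

Lemma dprime_inK m u : K u -> dprime m u = 0.
Proof.
elim=> [w K0w | | r v _ IH | a u1 v _ IH1 _ IH2].
- exact: dprime_K0.
- exact: lin0 (dprime_lin m).
- by rewrite dprime_h IH (lin0 (h_lin r)).
- by rewrite dprime_lin IH1 IH2 scaler0 addr0.
Qed.

Lemma Dbar_submodule_hbar (P : V -> Prop) : (forall m u, d m u = L m u) ->
  hbar_submodule h c3 P -> Dbar_submodule d h c1 c2 c3 P.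
Proof.
move=> dL [P0 P_lin Ph Pc3]; have P_scale a u : P u -> P (a *: u).
  by move=> Pu; rewrite -[a *: u]addr0; apply: P_lin.
split => // [m u Pu | u Pu].
  by rewrite dL; apply: (Lbar_closed z ell_neq0 h_restricted (P := P)).
by rewrite c1E c2E; split; [|split]; [apply: P_scale | apply: P_scale | apply: Pc3].
Qed.

Lemma exists_K0_neq0 : rM_minus_infty d h ell z nM -> exists2 v, K0 d h ell z nM v & v != 0.
Proof.
move=> rM; have [v [[Mv Yv] v_neq0]] := rM (-2); exists v => // n; split => // p _.
suff /eqP : dprime p v = 0 by rewrite subr_eq0 => /eqP ->; apply: Lbar_relP.
apply: (dprime_vanish (n0 := -2)) => // q q_ge.
by rewrite /dprime -(Lbar_rel_uniq h_lin ell_neq0 h_restricted (Yv q q_ge)) subrr.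
Qed.

Lemma inK_all v : Dbar_simple d h c1 c2 c3 -> K0 d h ell z nM v -> v != 0 -> forall u, K u.
Proof.
move=> [_ M_simple] K0v v_neq0; have [K_zero|//] := M_simple _ inK_Dbar_submodule.
by move: v_neq0; rewrite (K_zero v (inK_K0 K0v)) eqxx.
Qed.

Lemma d_eq_Lbar : (forall u, K u) -> forall m u, d m u = L m u.
Proof. by move=> K_all m u; apply/eqP; rewrite -subr_eq0; apply/eqP/dprime_inK. Qed.

Lemma d_Lbar_rel : (forall u, K u) -> forall n u, Lbar_rel h ell z n u (d n u).
Proof. by move=> K_all n u; rewrite d_eq_Lbar //; apply: Lbar_relP. Qed.

Lemma inK_hbar_simple v : Dbar_simple d h c1 c2 c3 -> K0 d h ell z nM v -> v != 0 ->
  (forall u, K u) -> hbar_simple h c3 K.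
Proof.
move=> [_ M_simple] K0v v_neq0 K_all; split; last split.
- split; [exact: inK_zero | exact: inK_lin | exact: inK_h |].
  by move=> u Ku; rewrite c3E; apply: inK_scale.
- by exists v; split => //; apply: inK_K0.
move=> P /(Dbar_submodule_hbar (d_eq_Lbar K_all)) /M_simple [P0|P_full] _; first by left.
by right => u _; apply: P_full.
Qed.

End DbarModule.

Unset Implicit Arguments.

Theorem proposition5p4 (V : lmodType C)
    (d h : int -> V -> V) (c1 c2 c3 : V -> V)
    (c ell zM : C) (nM : int) :
  is_Dbar_module d h c1 c2 c3 ->
  restricted d h ->
  Dbar_simple d h c1 c2 c3 ->
  (forall v, c1 v = c *: v) ->          (* central charge c *)
  (forall v, c3 v = ell *: v) ->        (* level ell *)
  ell != 0 ->
  (forall v, c2 v = zM *: v) ->         (* zM = scalar of \bar c_2 on M *)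
  is_nM h nM ->                         (* nM = n_M *)
  rM_minus_infty d h ell zM nM ->       (* r_M = -infinity *)
  exists z : C,
    (* M = K(z)^{\bar D}: K = M ... *)
    (forall v, inK d h ell zM nM v) /\
    (* ... and the \bar D-action is the one defining K(z)^{\bar D} *)
    (forall v, c1 v = (1 - 12%:R * z ^+ 2 / ell) *: v) /\
    (forall v, c2 v = z *: v) /\
    (forall (n : int) v, Lbar_rel h ell z n v (d n v)) /\
    (* hence c = 1 - 12 z^2 / ell and K is a simple \bar h-module *)
    c = 1 - 12%:R * z ^+ 2 / ell /\
    hbar_simple h c3 (inK d h ell zM nM).
Proof.
move=> Dmod restr M_simple c1E c3E ell_neq0 c2E _ rM.
have [v K0v v_neq0] := exists_K0_neq0 Dmod restr c1E c3E ell_neq0 c2E rM.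
have K_all := inK_all Dmod restr c1E c3E ell_neq0 c2E M_simple K0v v_neq0.
have cE := central_charge_eq Dmod restr c1E c3E ell_neq0 c2E K0v v_neq0.
exists zM; split; first exact: K_all.
split; first by move=> u; rewrite c1E cE.
split; first exact: c2E.
split; first exact: d_Lbar_rel Dmod restr c3E ell_neq0 c2E K_all.
split; first exact: cE.
exact: (inK_hbar_simple Dmod restr c1E c3E ell_neq0 c2E M_simple K0v v_neq0 K_all).
Qed.
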